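(* Let $\Gamma$ be a connected finite simple graph on $N\ge3$ vertices with $\varepsilon>\frac12$. Then: (1) if $u\ne w$ are vertices with $\deg u=\deg w=1$, there is no vertex $v$ with $u\sim v\sim w$; (2) there are no three distinct vertices $u\sim v\sim w$ with $\deg u,\deg v,\deg w\in\{1,2\}$.
   Context: For a finite simple graph $\Gamma=(V,E)$ without isolated vertices, $\deg v$ is the number of neighbours of $v$ and $\mathcal N(v)=\{w\in V: w\sim v\}$. The normalized Laplacian acts on functions $f:V\to\mathbb R$ by $\Delta f(v)=f(v)-\frac{1}{\deg v}\sum_{w\sim v}f(w)$; its eigenvalues are $0=\lambda_1\le\lambda_2\le\dots\le\lambda_N$, and $\varepsilon:=\min_i|1-\lambda_i|$. *)

From HB Require Import structures.
From mathcomp Require Import all_boot all_order all_algebra.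
From mathcomp Require Import reals.
Set Implicit Arguments. Unset Strict Implicit. Unset Printing Implicit Defensive.
Import Order.TTheory GRing.Theory Num.Theory.
Local Open Scope ring_scope.

Definition simple_graph (n : nat) (e : rel 'I_n) : Prop :=
  symmetric e /\ irreflexive e.

Definition connected_graph (n : nat) (e : rel 'I_n) : Prop :=
  forall x y : 'I_n, connect e x y.

Definition deg (n : nat) (e : rel 'I_n) (v : 'I_n) : nat := #|[set w | e v w]|.

(* Matrix of the normalized Laplacian:
   (Delta f)(v) = f(v) - (1/deg v) * sum_{w ~ v} f(w). *)
Definition norm_laplacian (R : realType) (n : nat) (e : rel 'I_n) : 'M[R]_n :=
  \matrix_(i, j) ((i == j)%:R - (e i j)%:R / (deg e i)%:R).

(* "epsilon > c" where epsilon = min_i |1 - lambda_i| over the eigenvalues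
   of the normalized Laplacian (all real, as Delta is similar to a symmetric
   matrix), i.e. every eigenvalue lambda satisfies c < |1 - lambda|. *)
Definition eps_gt (R : realType) (n : nat) (e : rel 'I_n) (c : R) : Prop :=
  forall lam : R, eigenvalue (norm_laplacian R e) lam -> c < `|1 - lam|.

(* With D the degree matrix and A the adjacency matrix, 1 - Delta = D^-1 A is
   similar to the symmetric matrix S = D^-1/2 A D^-1/2, so epsilon > c says that
   every eigenvalue of S has modulus > c.  By the spectral theorem this gives
   |y S|^2 > c^2 |y|^2 for y <> 0, which for y = f D^1/2 reads
     sum_j (sum_(i ~ j) f i)^2 / deg j > c^2 sum_i deg i * (f i)^2.
   For c = 1/2 each forbidden configuration violates this for a test function
   supported on two vertices at distance two: f = 1 and -1 on two leaves with
   a common neighbour (the left side vanishes), f = 2 and -1 on the ends of a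
   path x ~ u ~ v with deg x = 1 and deg u = deg v = 2, and f = 1 and -1 on the
   ends of a path of three vertices of degree 2, whose other neighbours have
   degree at least 2 by the previous case. *)

From HB Require Import structures.
From mathcomp Require Import all_boot all_order all_algebra.
From mathcomp Require Import reals complex ring lra.
Set Implicit Arguments.
Unset Strict Implicit.
Unset Printing Implicit Defensive.
Import Order.TTheory GRing.Theory Num.Theory.
Local Open Scope ring_scope.
Local Open Scope sesquilinear_scope.

Section HermitianBound.
Variable C : numClosedFieldType.

Lemma mulmx_trmxC_row n (y : 'rV[C]_n) : (y *m y^t*) 0 0 = \sum_k `|y 0 k| ^+ 2.
Proof. by rewrite !mxE; apply: eq_bigr => k _; rewrite !mxE normCK. Qed.

Lemma eigenvalue_spectral_diag n (A : 'M[C]_n) k :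
  A \is normalmx -> eigenvalue A (spectral_diag A 0 k).
Proof.
move=> /orthomx_spectralP hA; set U := spectralmx A.
have Uunit : U \in unitmx := spectral_unit A.
apply/eigenvalueP; exists (row k U).
  by rewrite -row_mul {1}hA !mulmxA mulmxV // mul1mx row_mul row_diag_mx -scalemxAl -rowE.
have ek : row k U *m invmx U = 'e_k by rewrite -row_mul mulmxV // rowE mulmx1.
apply/negP => /eqP Uk0; move: ek; rewrite Uk0 mul0mx => /matrixP/(_ 0 k)/eqP.
by rewrite !mxE !eqxx mulr1n eq_sym oner_eq0.
Qed.

Lemma hermitian_sqrnorm_gt n (A : 'M[C]_n) (c : C) (y : 'rV[C]_n) :
  A \is hermsymmx -> 0 <= c ->
  (forall a, eigenvalue A a -> a \is Num.real -> c < `|a|) -> y != 0 ->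
  c ^+ 2 * (y *m y^t*) 0 0 < ((y *m A) *m (y *m A)^t*) 0 0.
Proof.
move=> Aherm c0 cA y0; set U := spectralmx A; set D := spectral_diag A.
have Uu : U \is unitarymx := spectral_unitarymx A.
have hA : A = U^t* *m diag_mx D *m U.
  by rewrite -invmx_unitary //; exact/orthomx_spectralP/hermitian_normalmx.
have cD k : c < `|D 0 k|.
  apply: cA; first exact/eigenvalue_spectral_diag/hermitian_normalmx.
  by move/mxOverP: (hermitian_spectral_diag_real Aherm); apply.
have sqrnormU (x : 'rV_n) : (x *m U) *m (x *m U)^t* = x *m x^t*.
  by rewrite trmx_mul map_mxM mulmxA mulmxtVK.
set z := y *m U^t*.
have yz : y = z *m U by rewrite /z mulmxKtV.
have yA : y *m A = z *m diag_mx D *m U by rewrite yz hA !mulmxA mulmxtVK.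
have [k zk] : exists k, z 0 k != 0.
  by apply/rV0Pn; apply: contraNneq y0 => z0; rewrite yz z0 mul0mx.
have -> : y *m y^t* = z *m z^t* by rewrite yz sqrnormU.
rewrite yA sqrnormU !mulmx_trmxC_row mulr_sumr.
rewrite (bigD1 k) //= [X in _ < X](bigD1 k) //=.
have zD j : (z *m diag_mx D) 0 j = z 0 j * D 0 j by rewrite mul_mx_diag mxE.
have cD2 j : c ^+ 2 <= `|D 0 j| ^+ 2 by rewrite lerXn2r ?nnegrE // ltW.
apply: ltr_leD; last first.
  apply: ler_sum => j _; rewrite zD normrM exprMn mulrC.
  by rewrite ler_wpM2l ?exprn_ge0.
rewrite zD normrM exprMn mulrC ltr_pM2l ?exprn_gt0 ?normr_gt0 //.
by rewrite ltrXn2r ?nnegrE.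
Qed.

End HermitianBound.

Lemma symmetric_sqrnorm_gt (R : rcfType) n (S : 'M[R]_n) (c : R) (y : 'rV[R]_n) :
  S^T = S -> 0 <= c -> (forall a, eigenvalue S a -> c < `|a|) -> y != 0 ->
  c ^+ 2 * (y *m y^T) 0 0 < ((y *m S) *m (y *m S)^T) 0 0.
Proof.
move=> ST c0 cS y0; pose f := real_complex R.
have trmxC_f m p (M : 'M[R]_(m, p)) : (map_mx f M)^t* = map_mx f M^T.
  by apply/matrixP => i j; rewrite !mxE conj_Creal //; apply/complex_realP; exists (M j i).
have f11 (M : 'M[R]_1) : (map_mx f M) 0 0 = f (M 0 0) by rewrite mxE.
have := @hermitian_sqrnorm_gt _ _ (map_mx f S) (c%:C)%C (map_mx f y).
rewrite -map_mxM !trmxC_f -!map_mxM !f11 -rmorphXn -rmorphM ltcR; apply.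
- by apply/is_hermitianmxP; rewrite expr0 scale1r trmxC_f ST.
- by rewrite ler0c.
- move=> _ /[swap] /complex_realP [a ->].
  rewrite eigenvalue_root_char -map_char_poly fmorph_root -eigenvalue_root_char.
  by rewrite normc_def /= expr0n addr0 sqrtr_sqr ltcR; apply: cS.
- apply: contraNneq y0 => fy0; apply/eqP/matrixP => i j.
  by have := congr1 (fun M : 'rV_n => M i j) fy0; rewrite !mxE; apply: complexI.
Qed.

Lemma sum_supp2 (V : nmodType) (I : finType) (G : I -> V) u w : u != w ->
  (forall i, i != u -> i != w -> G i = 0) -> \sum_i G i = G u + G w.
Proof.
move=> uw G0; rewrite (bigD1 u) //= (bigD1 w) 1?eq_sym //= big1 ?addr0 //.
by move=> i /andP [iu iw]; apply: G0.
Qed.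

Section NormalizedLaplacian.
Variables (R : realType) (n : nat) (e : rel 'I_n).
Hypothesis e_sym : symmetric e.
Hypothesis deg_gt0 : forall v, (0 < deg e v)%N.

Local Notation d v := ((deg e v)%:R : R).
Local Notation sqd v := (Num.sqrt (d v)).

Definition sym_norm_adjacency : 'M[R]_n :=
  \matrix_(i, j) ((e i j)%:R / (sqd i * sqd j)).

Let sqd_neq0 v : sqd v != 0. Proof. by rewrite gt_eqF ?sqrtr_gt0 ?ltr0n. Qed.
Let sqd_sqr v : sqd v ^+ 2 = d v. Proof. by rewrite sqr_sqrtr ?ler0n. Qed.

Lemma eigenvalue_sym_norm_adjacency mu :
  eigenvalue sym_norm_adjacency mu -> eigenvalue (norm_laplacian R e) (1 - mu).
Proof.
case/eigenvalueP => v vS v0; apply/eigenvalueP; exists (\row_i (v 0 i * sqd i)).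
  have -> : norm_laplacian R e = 1%:M - \matrix_(i, j) ((e i j)%:R / d i).
    by apply/matrixP => i j; rewrite !mxE.
  rewrite mulmxBr mulmx1 scalerBl scale1r; congr (_ - _).
  apply/rowP => j; have := congr1 (fun M : 'rV_n => M 0 j) vS; rewrite !mxE => vSj.
  rewrite mulrA -vSj mulr_suml; apply: eq_bigr => i _; rewrite !mxE.
  move: (sqd_neq0 i) (sqd_neq0 j) (sqd_sqr i).
  set si := sqd i; set sj := sqd j; clearbody si sj => si0 sj0 <-.
  by field; rewrite si0 sj0.
apply: contraNneq v0 => /rowP v0; apply/eqP/rowP => k.
by have /eqP := v0 k; rewrite !mxE mulf_eq0 (negbTE (sqd_neq0 k)) orbF => /eqP.
Qed.

Lemma norm_laplacian_test_bound (c : R) (f : 'I_n -> R) k :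
  0 <= c -> eps_gt e c -> f k != 0 ->
  c ^+ 2 * \sum_i f i ^+ 2 * d i <
  \sum_j (\sum_i f i * (e i j)%:R) ^+ 2 / d j.
Proof.
move=> c0 ceps fk; pose y := \row_i (f i * sqd i).
have y0 : y != 0 by apply/rV0Pn; exists k; rewrite mxE mulf_neq0.
have ST : sym_norm_adjacency^T = sym_norm_adjacency.
  by apply/matrixP => i j; rewrite !mxE e_sym (mulrC (sqd j)).
have cS a : eigenvalue sym_norm_adjacency a -> c < `|a|.
  by move/eigenvalue_sym_norm_adjacency/ceps; rewrite opprB addrC subrK.
have := symmetric_sqrnorm_gt ST c0 cS y0.
have -> : (y *m y^T) 0 0 = \sum_i f i ^+ 2 * d i.
  by rewrite mxE; apply: eq_bigr => i _; rewrite !mxE mulrACA -!expr2 sqd_sqr.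
have yS j : (y *m sym_norm_adjacency) 0 j = (\sum_i f i * (e i j)%:R) / sqd j.
  rewrite mxE mulr_suml; apply: eq_bigr => i _; rewrite !mxE.
  by field; rewrite !sqd_neq0.
congr (_ < _); rewrite mxE; apply: eq_bigr => j _.
by rewrite [_^T _ _]mxE yS -expr2 expr_div_n sqd_sqr.
Qed.

Lemma two_point_test_bound (c a b : R) u w :
  0 <= c -> eps_gt e c -> u != w -> a != 0 ->
  c ^+ 2 * (a ^+ 2 * d u + b ^+ 2 * d w) <
  \sum_j (a * (e u j)%:R + b * (e w j)%:R) ^+ 2 / d j.
Proof.
move=> c0 ceps uw a0.
pose f i := if i == u then a else if i == w then b else 0.
have fu : f u = a by rewrite /f eqxx.
have fw : f w = b by rewrite /f eq_sym (negbTE uw) eqxx.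
have f0 i : i != u -> i != w -> f i = 0 by rewrite /f => /negbTE -> /negbTE ->.
have := @norm_laplacian_test_bound c f u c0 ceps; rewrite fu => /(_ a0).
rewrite (sum_supp2 uw) => [|i iu iw]; last by rewrite f0 // expr0n mul0r.
rewrite fu fw; congr (_ < _); apply: eq_bigr => j _.
by rewrite (sum_supp2 uw) => [|i iu iw]; rewrite ?fu ?fw // f0 ?mul0r.
Qed.

End NormalizedLaplacian.

Lemma sumr_indicator (R : pzSemiRingType) (I : finType) (P : pred I) :
  \sum_i ((P i)%:R : R) = #|P|%:R.
Proof.
rewrite -sumr_const [RHS]big_mkcond; apply: eq_bigr => i _.
by rewrite unfold_in; case: (P i).
Qed.

Lemma natr_inv_le (F : numFieldType) m k : (0 < m)%N -> (m <= k)%N ->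
  (k%:R : F)^-1 <= (m%:R)^-1.
Proof.
move=> m0 mk; rewrite lef_pV2 ?posrE ?ltr0n ?ler_nat //.
exact: leq_trans mk.
Qed.

Lemma deg1_adj_eq n (e : rel 'I_n) u v w :
  deg e u = 1%N -> e u v -> e u w -> w = v.
Proof.
move=> /eqP/cards1P [x Nu] euv euw.
have : v \in [set y | e u y] by rewrite inE.
have : w \in [set y | e u y] by rewrite inE.
by rewrite Nu !inE => /eqP -> /eqP ->.
Qed.

Lemma sum_other_neighbours (R : pzSemiRingType) n (e : rel 'I_n) w v :
  e w v -> \sum_j (((e w j) && (j != v))%:R : R) = (deg e w).-1%:R.
Proof.
move=> ewv; rewrite sumr_indicator /deg (cardsD1 v) inE ewv /=.
by congr _%:R; apply: eq_card => j; rewrite !inE andbC.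
Qed.

Lemma connected_deg_gt0 n (e : rel 'I_n) :
  connected_graph e -> (1 < n)%N -> forall v, (0 < deg e v)%N.
Proof.
move=> conn n1 v.
have [w wv] : exists w : 'I_n, w != v.
  have [->|v0] := eqVneq v (Ordinal (ltnW n1)); first by exists (Ordinal n1).
  by exists (Ordinal (ltnW n1)); rewrite eq_sym.
have /connectP [[|x p] /= vp wE] := conn v w; first by rewrite -wE eqxx in wv.
by case/andP: vp => evx _; rewrite /deg card_gt0; apply/set0Pn; exists x; rewrite inE.
Qed.

Section HalfSpectralGap.
Variables (R : realType) (n : nat) (e : rel 'I_n).
Hypothesis e_sym : symmetric e.
Hypothesis deg_gt0 : forall v, (0 < deg e v)%N.
Hypothesis eps_half : eps_gt e (2^-1 : R).

Let half_ge0 : 0 <= 2^-1 :> R. Proof. by rewrite invr_ge0 ler0n. Qed.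

Lemma leaves_no_common_neighbour u v w :
  u != w -> deg e u = 1%N -> deg e w = 1%N -> e u v -> ~~ e v w.
Proof.
move=> uw du dw euv; apply/negP => evw; have ewv : e w v by rewrite e_sym.
have Nuw j : e u j = e w j.
  by apply/idP/idP => [/(deg1_adj_eq du euv)|/(deg1_adj_eq dw ewv)] ->.
have := two_point_test_bound e_sym deg_gt0 (-1) half_ge0 eps_half uw (oner_neq0 R).
rewrite big1 => [|j _]; last by rewrite Nuw mul1r mulN1r subrr expr0n mul0r.
by rewrite du dw; lra.
Qed.

Lemma no_leaf_deg2_deg2_path x u v :
  deg e x = 1%N -> deg e u = 2%N -> deg e v = 2%N -> e x u -> ~~ e u v.
Proof.
move=> dx du dv exu; apply/negP => euv; have evu : e v u by rewrite e_sym.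
have xv : x != v by apply: contra_eq_neq dx => ->; rewrite dv.
have two_neq0 : 2 != 0 :> R by rewrite pnatr_eq0.
have test := two_point_test_bound e_sym deg_gt0 (-1) half_ge0 eps_half xv two_neq0.
suff : \sum_j (2 * (e x j)%:R + -1 * (e v j)%:R) ^+ 2 / (deg e j)%:R <=
       \sum_j (((j == u)%:R : R) / 2 + ((e v j) && (j != u))%:R).
  rewrite big_split /= -mulr_suml sumr_indicator card1 sum_other_neighbours //.
  by move: test; rewrite dx dv /=; lra.
apply: ler_sum => j _; have [->|ju] := eqVneq j u; first by rewrite exu evu du /=; lra.
have -> : e x j = false by apply: contra_neqF ju => /(deg1_adj_eq dx exu).
case: (e v j) => /=; last lra.
by have := natr_inv_le R (isT : (0 < 1)%N) (deg_gt0 j); rewrite invr1; lra.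
Qed.

Lemma no_deg2_path u v w : u != w ->
  deg e u = 2%N -> deg e v = 2%N -> deg e w = 2%N -> e u v -> ~~ e v w.
Proof.
move=> uw du dv dw euv; apply/negP => evw; have ewv : e w v by rewrite e_sym.
have deg_ge2 x j : deg e x = 2%N -> e x v -> e x j -> (1 < deg e j)%N.
  move=> dx exv exj; rewrite ltn_neqAle deg_gt0 andbT eq_sym; apply/eqP => dj.
  by have := no_leaf_deg2_deg2_path dj dx dv; rewrite e_sym exj exv => /(_ isT).
have test := two_point_test_bound e_sym deg_gt0 (-1) half_ge0 eps_half uw (oner_neq0 R).
suff : \sum_j (1 * (e u j)%:R + -1 * (e w j)%:R) ^+ 2 / (deg e j)%:R <=
       \sum_j ((((e u j) && (j != v))%:R + ((e w j) && (j != v))%:R) / 2 : R).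
  rewrite -mulr_suml big_split /= !sum_other_neighbours //.
  by move: test; rewrite du dw /=; lra.
apply: ler_sum => j _; have [->|jv] := eqVneq j v; first by rewrite euv ewv /=; lra.
have half_inv x : deg e x = 2%N -> e x v -> e x j -> ((deg e j)%:R : R)^-1 <= 2^-1.
  by move=> dx exv exj; apply: natr_inv_le => //; apply: deg_ge2 exj.
case euj: (e u j); case ewj: (e w j) => /=; try lra.
  by have := half_inv u du euv euj; lra.
by have := half_inv w dw ewv ewj; lra.
Qed.

End HalfSpectralGap.

Theorem mainTheorem16 (R : realType) (n : nat) (e : rel 'I_n) :
  simple_graph e -> connected_graph e -> (3 <= n)%N ->
  eps_gt e (2^-1 : R) ->
  (forall u v w : 'I_n, u != w -> deg e u = 1%N -> deg e w = 1%N ->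
     ~ (e u v /\ e v w)) /\
  (forall u v w : 'I_n, u != v -> v != w -> u != w -> e u v -> e v w ->
     ~ [/\ (deg e u == 1)%N || (deg e u == 2)%N,
           (deg e v == 1)%N || (deg e v == 2)%N &
           (deg e w == 1)%N || (deg e w == 2)%N]).
Proof.
move=> [e_sym _] conn n3 eps_half.
have deg_gt0 := connected_deg_gt0 conn (ltnW n3).
split=> [u v w uw du dw [euv]|u v w _ _ uw euv evw [du dv dw]].
  exact/negP/(leaves_no_common_neighbour e_sym deg_gt0 eps_half uw du dw euv).
have evu : e v u by rewrite e_sym.
have {dv} dv : deg e v = 2%N.
  case/orP: dv => /eqP // dv.
  by move: uw; rewrite (deg1_adj_eq dv evu evw) eqxx.
case/orP: du => /eqP du; case/orP: dw => /eqP dw.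
- by move: evw; apply/negP/(leaves_no_common_neighbour e_sym deg_gt0 eps_half uw du dw euv).
- by move: evw; apply/negP/(no_leaf_deg2_deg2_path e_sym deg_gt0 eps_half du dv dw euv).
- by move: evu; apply/negP/(no_leaf_deg2_deg2_path e_sym deg_gt0 eps_half dw dv du); rewrite e_sym.
- by move: evw; apply/negP/(no_deg2_path e_sym deg_gt0 eps_half uw du dv dw euv).
Qed.
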